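(* Let $\mathcal{T}$ be a stiffly-connected, edge-simple 3-dimensional truss with vertices at points $\mathbf{p}_1,\dots,\mathbf{p}_n$, and let $\mathbf{q}\in\mathbb{R}^{3n}$ be orthogonal to the null space of its stiffness matrix. For each oriented triangle $s=\langle s_1,s_2,s_3\rangle$ of the mesh there exists a (unique) vector $\bar{\mathbf{q}}^{\langle s\rangle}=\mathbf{q}+c^{\langle s\rangle\perp xy}\mathbf{p}^{\perp xy}+c^{\langle s\rangle\perp xz}\mathbf{p}^{\perp xz}+c^{\langle s\rangle\perp yz}\mathbf{p}^{\perp yz}$ with scalars $c^{\langle s\rangle\perp xy},c^{\langle s\rangle\perp xz},c^{\langle s\rangle\perp yz}\in\mathbb{R}$, such that (1) the plane containing the points $\bar{\mathbf{q}}^{\langle s\rangle}_{s_1},\bar{\mathbf{q}}^{\langle s\rangle}_{s_2},\bar{\mathbf{q}}^{\langle s\rangle}_{s_3}$ is parallel to the plane containing $\mathbf{p}_{s_1},\mathbf{p}_{s_2},\mathbf{p}_{s_3}$, and (2) the segment from $\bar{\mathbf{q}}^{\langle s\rangle}_{s_1}$ to $\bar{\mathbf{q}}^{\langle s\rangle}_{s_2}$ is parallel to $\mathbf{p}_{s_1}-\mathbf{p}_{s_2}$.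
   Context: A 3-dimensional truss has $n$ vertices at distinct points $\mathbf{p}_i\in\mathbb{R}^3$, a set of tetrahedra (four vertices each), edges all pairs of vertices sharing a tetrahedron, and positive stiffness coefficients $\gamma(e)$; its stiffness matrix is $\sum_{e=(i,j)}\frac{\gamma(e)}{\|\mathbf{p}_i-\mathbf{p}_j\|_2}\mathbf{b}^{(e)}\mathbf{b}^{(e)\top}$ where $\mathbf{b}^{(e)}\in\mathbb{R}^{3n}$ has block $i$ equal to $(\mathbf{p}_i-\mathbf{p}_j)/\|\mathbf{p}_i-\mathbf{p}_j\|_2$, block $j$ its negative, zeros elsewhere. Edge-simple: tetrahedra form a simplicial complex, each has constant-bounded aspect ratio, and edge lengths and stiffness coefficients are bounded above and below by positive constants. Stiffly-connected: the graph on tetrahedra with adjacency = sharing a triangle face is connected, and for each vertex its restriction to the tetrahedra containing that vertex is connected. For a vector $\mathbf{v}\in\mathbb{R}^{3n}$, $\mathbf{v}_i\in\mathbb{R}^3$ denotes its $i$-th block (coordinates $3i-2,\dots,3i$). Fix an index $c$; define $\mathbf{p}^{\perp xy},\mathbf{p}^{\perp xz},\mathbf{p}^{\perp yz}\in\mathbb{R}^{3n}$ by $\mathbf{p}^{\perp xy}_i=[-(\mathbf{p}_i-\mathbf{p}_c)_y,(\mathbf{p}_i-\mathbf{p}_c)_x,0]^\top$, $\mathbf{p}^{\perp xz}_i=[-(\mathbf{p}_i-\mathbf{p}_c)_z,0,(\mathbf{p}_i-\mathbf{p}_c)_x]^\top$, $\mathbf{p}^{\perp yz}_i=[0,-(\mathbf{p}_i-\mathbf{p}_c)_z,(\mathbf{p}_i-\mathbf{p}_c)_y]^\top$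 (these, together with the three translation vectors, span the null space of the stiffness matrix). An oriented triangle is an ordered triple of vertices forming a triangle face of some tetrahedron. *)

(* Vectors of R^3 are row vectors 'rV[R]_3; a vector of
   R^{3n} is represented blockwise as a matrix 'M[R]_(n,3) whose i-th row is
   the i-th block (coordinates 3i-2..3i). *)
From HB Require Import structures.
From mathcomp Require Import all_boot all_order all_algebra.
Set Implicit Arguments. Unset Strict Implicit. Unset Printing Implicit Defensive.
Import Order.TTheory GRing.Theory Num.Theory.
Local Open Scope ring_scope.

Section Truss.
Variable R : rcfType.

Definition cx (v : 'rV[R]_3) : R := v ord0 (inord 0).
Definition cy (v : 'rV[R]_3) : R := v ord0 (inord 1).
Definition cz (v : 'rV[R]_3) : R := v ord0 (inord 2).

Definition vec3 (a b c : R) : 'rV[R]_3 :=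
  \row_(k < 3) (if val k == 0%N then a else if val k == 1%N then b else c).

Definition dot3 (u v : 'rV[R]_3) : R := \sum_(k < 3) u ord0 k * v ord0 k.
Definition norm3 (u : 'rV[R]_3) : R := Num.sqrt (dot3 u u).
Definition cross3 (u v : 'rV[R]_3) : 'rV[R]_3 :=
  vec3 (cy u * cz v - cz u * cy v) (cz u * cx v - cx u * cz v)
       (cx u * cy v - cy u * cx v).
Definition det3 (u v w : 'rV[R]_3) : R := dot3 u (cross3 v w).

Variable n : nat.

Definition dotN (u v : 'M[R]_(n,3)) : R := \sum_(i < n) \sum_(k < 3) u i k * v i k.

Definition elen (p : 'I_n -> 'rV[R]_3) (i j : 'I_n) : R := norm3 (p i - p j).

Definition is_edge (tets : {set {set 'I_n}}) (i j : 'I_n) : bool :=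
  (i != j) && [exists T in tets, (i \in T) && (j \in T)].

Definition bvec (p : 'I_n -> 'rV[R]_3) (i j : 'I_n) : 'M[R]_(n,3) :=
  \matrix_(k < n, l < 3)
    (if k == i then (p i - p j) ord0 l / elen p i j
     else if k == j then - ((p i - p j) ord0 l / elen p i j) else 0).

(* the stiffness matrix, as the linear operator v |-> K v on R^{3n};
   edges are unordered, summed once with i < j; gamma is indexed by the
   edge {i,j} *)
Definition stiffness (p : 'I_n -> 'rV[R]_3) (tets : {set {set 'I_n}})
    (gamma : {set 'I_n} -> R) (v : 'M[R]_(n,3)) : 'M[R]_(n,3) :=
  \sum_(i < n) \sum_(j < n | (i < j)%N && is_edge tets i j)
     ((gamma [set i; j] / elen p i j) * dotN (bvec p i j) v) *: bvec p i j.

Definition in_hull (p : 'I_n -> 'rV[R]_3) (S : {set 'I_n}) (x : 'rV[R]_3) : Prop :=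
  exists w : 'I_n -> R,
    [/\ forall i, 0 <= w i, forall i, i \notin S -> w i = 0,
        \sum_(i < n) w i = 1 & x = \sum_(i < n) w i *: p i].

(* the tetrahedra form a (geometric) simplicial complex: each is a 4-set of
   vertices, and two tetrahedra meet exactly in the hull of their common
   vertices (a common face, possibly empty) *)
Definition simplicial_complex (p : 'I_n -> 'rV[R]_3) (tets : {set {set 'I_n}}) : Prop :=
  (forall T, T \in tets -> #|T| = 4%N) /\
  (forall T1 T2, T1 \in tets -> T2 \in tets -> forall x,
     in_hull p T1 x -> in_hull p T2 x -> in_hull p (T1 :&: T2) x).

(* aspect ratio of T bounded by A: (longest edge)^3 <= A * 6 * volume *)
Definition aspect_bounded (p : 'I_n -> 'rV[R]_3) (A : R) (T : {set 'I_n}) : Prop :=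
  forall a b c d, a \in T -> b \in T -> c \in T -> d \in T ->
    uniq [:: a; b; c; d] ->
    forall i j, i \in T -> j \in T ->
      elen p i j ^+ 3 <= A * `|det3 (p b - p a) (p c - p a) (p d - p a)|.

Definition edge_simple (p : 'I_n -> 'rV[R]_3) (tets : {set {set 'I_n}})
    (gamma : {set 'I_n} -> R) (A lmin lmax gmin gmax : R) : Prop :=
  [/\ 0 < A, 0 < lmin & 0 < gmin] /\
  [/\ simplicial_complex p tets,
      (forall T, T \in tets -> aspect_bounded p A T),
      (forall i j, is_edge tets i j -> lmin <= elen p i j <= lmax) &
      (forall i j, is_edge tets i j -> gmin <= gamma [set i; j] <= gmax)].

Definition face_adj (S : {set {set 'I_n}}) : rel {set 'I_n} :=
  fun T1 T2 => [&& T1 \in S, T2 \in S & #|T1 :&: T2| == 3%N].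

Definition graph_connected (S : {set {set 'I_n}}) : Prop :=
  forall T1 T2, T1 \in S -> T2 \in S -> connect (face_adj S) T1 T2.

Definition stiffly_connected (tets : {set {set 'I_n}}) : Prop :=
  graph_connected tets /\
  forall v : 'I_n, graph_connected [set T in tets | v \in T].

(* the infinitesimal rotation vectors about p_c *)
Definition pxy (p : 'I_n -> 'rV[R]_3) (c : 'I_n) : 'M[R]_(n,3) :=
  \matrix_(i < n) (let d := p i - p c in vec3 (- cy d) (cx d) 0).
Definition pxz (p : 'I_n -> 'rV[R]_3) (c : 'I_n) : 'M[R]_(n,3) :=
  \matrix_(i < n) (let d := p i - p c in vec3 (- cz d) 0 (cx d)).
Definition pyz (p : 'I_n -> 'rV[R]_3) (c : 'I_n) : 'M[R]_(n,3) :=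
  \matrix_(i < n) (let d := p i - p c in vec3 0 (- cz d) (cy d)).

Definition oriented_triangle (tets : {set {set 'I_n}}) (s1 s2 s3 : 'I_n) : Prop :=
  uniq [:: s1; s2; s3] /\ exists2 T, T \in tets & [&& s1 \in T, s2 \in T & s3 \in T].

Definition blk (v : 'M[R]_(n,3)) (i : 'I_n) : 'rV[R]_3 := row i v.

Definition triangle_aligned (p : 'I_n -> 'rV[R]_3) (qb : 'M[R]_(n,3))
    (s1 s2 s3 : 'I_n) : Prop :=
  let N := cross3 (p s2 - p s1) (p s3 - p s1) in
  [/\ dot3 (blk qb s2 - blk qb s1) N = 0,
      dot3 (blk qb s3 - blk qb s1) N = 0 &
      cross3 (blk qb s1 - blk qb s2) (p s1 - p s2) = 0].

End Truss.

From HB Require Import structures.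
From mathcomp Require Import all_boot all_order all_algebra ring.
Import Order.TTheory GRing.Theory Num.Theory.
Set Implicit Arguments. Unset Strict Implicit. Unset Printing Implicit Defensive.
Local Open Scope ring_scope.

(* Adding [cxy *: pxy + cxz *: pxz + cyz *: pyz] to [q] adds to block [i] the
   infinitesimal rotation [w × (p i - p c)] with [w = (cyz, -cxz, cxy)], so with
   [a, b] the edge vectors of the triangle and [u, v] the corresponding block
   differences of [q], the two conditions become affine equations in [w]:
   [u + w × a] is parallel to [a] and [v + w × b] is orthogonal to [a × b].
   The tetrahedron containing the triangle has bounded aspect ratio and an edge
   of positive length, so [a × b <> 0].  Then the homogeneous system forces
   first [w ∥ a] and then [w = 0], and [w = (u × a)/|a|² + mu a] solves the
   inhomogeneous one for a suitable [mu]. *)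

Section Vec3.
Variable R : rcfType.
Implicit Types (k : R) (a b d u v w x y z : 'rV[R]_3).

Lemma vec3E u : u = vec3 (cx u) (cy u) (cz u).
Proof.
apply/rowP => -[[|[|[|//]]] lt_k3]; rewrite !mxE /cx /cy /cz /=;
  by congr (u _ _); apply/val_inj; rewrite /= inordK.
Qed.

Lemma cx_vec3 (r s t : R) : cx (vec3 r s t) = r.
Proof. by rewrite /cx mxE /= inordK. Qed.
Lemma cy_vec3 (r s t : R) : cy (vec3 r s t) = s.
Proof. by rewrite /cy mxE /= inordK. Qed.
Lemma cz_vec3 (r s t : R) : cz (vec3 r s t) = t.
Proof. by rewrite /cz mxE /= inordK. Qed.

Lemma row3P u v : cx u = cx v -> cy u = cy v -> cz u = cz v -> u = v.
Proof. by move=> ex ey ez; rewrite (vec3E u) (vec3E v) ex ey ez. Qed.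

Lemma dot3_coord u v : dot3 u v = cx u * cx v + cy u * cy v + cz u * cz v.
Proof.
by rewrite {1}(vec3E u) {1}(vec3E v) /dot3 !big_ord_recr big_ord0 /= !mxE /= add0r.
Qed.

Lemma cx0 : cx 0 = 0 :> R. Proof. by rewrite /cx mxE. Qed.
Lemma cy0 : cy 0 = 0 :> R. Proof. by rewrite /cy mxE. Qed.
Lemma cz0 : cz 0 = 0 :> R. Proof. by rewrite /cz mxE. Qed.
Lemma cxD u v : cx (u + v) = cx u + cx v. Proof. by rewrite /cx mxE. Qed.
Lemma cyD u v : cy (u + v) = cy u + cy v. Proof. by rewrite /cy mxE. Qed.
Lemma czD u v : cz (u + v) = cz u + cz v. Proof. by rewrite /cz mxE. Qed.
Lemma cxN u : cx (- u) = - cx u. Proof. by rewrite /cx mxE. Qed.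
Lemma cyN u : cy (- u) = - cy u. Proof. by rewrite /cy mxE. Qed.
Lemma czN u : cz (- u) = - cz u. Proof. by rewrite /cz mxE. Qed.
Lemma cxZ k u : cx (k *: u) = k * cx u. Proof. by rewrite /cx mxE. Qed.
Lemma cyZ k u : cy (k *: u) = k * cy u. Proof. by rewrite /cy mxE. Qed.
Lemma czZ k u : cz (k *: u) = k * cz u. Proof. by rewrite /cz mxE. Qed.

Let coord3E := (cx0, cy0, cz0, cx_vec3, cy_vec3, cz_vec3, cxD, cyD, czD, cxN, cyN, czN,
  cxZ, cyZ, czZ, dot3_coord).

Lemma cross3_self u : cross3 u u = 0.
Proof. by apply/row3P; rewrite /cross3 !coord3E; ring. Qed.

Lemma cross30l u : cross3 0 u = 0.
Proof. by apply/row3P; rewrite /cross3 !coord3E; ring. Qed.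

Lemma cross3_double x u :
  cross3 (cross3 x u) u = dot3 u x *: u - dot3 u u *: x.
Proof. by apply/row3P; rewrite /cross3 !coord3E; ring. Qed.

Lemma cross3Dl x y z : cross3 (x + y) z = cross3 x z + cross3 y z.
Proof. by apply/row3P; rewrite /cross3 !coord3E; ring. Qed.

Lemma cross3Zl k x y : cross3 (k *: x) y = k *: cross3 x y.
Proof. by apply/row3P; rewrite /cross3 !coord3E; ring. Qed.

Lemma cross3Nl x y : cross3 (- x) y = - cross3 x y.
Proof. by apply/row3P; rewrite /cross3 !coord3E; ring. Qed.

Lemma cross3NN x y : cross3 (- x) (- y) = cross3 x y.
Proof. by apply/row3P; rewrite /cross3 !coord3E; ring. Qed.

Lemma dot3Dl x y z : dot3 (x + y) z = dot3 x z + dot3 y z.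
Proof. by rewrite !coord3E; ring. Qed.

Lemma dot3Zl k x y : dot3 (k *: x) y = k * dot3 x y.
Proof. by rewrite !coord3E; ring. Qed.

Lemma dot3Nl x y : dot3 (- x) y = - dot3 x y.
Proof. by rewrite !coord3E; ring. Qed.

Lemma dot3_crossl u v : dot3 u (cross3 u v) = 0.
Proof. by rewrite /cross3 !coord3E; ring. Qed.

Lemma det3_cross u v w : det3 u v w = dot3 w (cross3 u v).
Proof. by rewrite /det3 /cross3 !coord3E; ring. Qed.

Lemma dot3_self_eq0 u : (dot3 u u == 0) = (u == 0).
Proof.
apply/idP/eqP => [|->]; last by rewrite !coord3E !mulr0 !addr0.
rewrite /dot3 psumr_eq0 => [/allP u0|k _]; last exact: sqr_ge0.
apply/rowP => k; rewrite mxE; apply/eqP.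
by rewrite -sqrf_eq0 expr2; exact: (u0 k (mem_index_enum k)).
Qed.

(* [a], [b]: edge vectors of a triangle; [u], [v]: displacement differences
   along them; [w]: angular velocity of the added rotation. *)
Definition rotation_aligns a b u v w : Prop :=
  [/\ dot3 (u + cross3 w a) (cross3 a b) = 0,
      dot3 (v + cross3 w b) (cross3 a b) = 0 &
      cross3 (u + cross3 w a) a = 0].

Section RotationAligns.
Variables a b u v : 'rV[R]_3.
Hypothesis ab_indep : cross3 a b != 0.

Let N := cross3 a b.

Let N_nondeg : dot3 N N != 0.
Proof. by rewrite dot3_self_eq0. Qed.

Let a_nondeg : dot3 a a != 0.
Proof. by rewrite dot3_self_eq0; apply: contraNneq ab_indep => ->; rewrite cross30l. Qed.

Lemma rotation_aligns_kernel d :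
  cross3 (cross3 d a) a = 0 -> dot3 (cross3 d b) N = 0 -> d = 0.
Proof.
move=> dada0 dbN0.
have d_par : d = (dot3 a d / dot3 a a) *: a.
  have : dot3 a a *: d = dot3 a d *: a.
    by apply/eqP; rewrite eq_sym -subr_eq0 -cross3_double dada0.
  by move/(congr1 ( *:%R (dot3 a a)^-1)); rewrite !scalerA mulVf // scale1r mulrC.
move: dbN0; rewrite d_par cross3Zl dot3Zl => /eqP; rewrite mulf_eq0 (negPf N_nondeg) orbF.
by move/eqP->; rewrite scale0r.
Qed.

Lemma rotation_aligns_exists : exists w, rotation_aligns a b u v w.
Proof.
(* [w0] turns [u] into its projection on [a]; adding [mu *: a] leaves
   [w × a] unchanged and is used to meet the second condition. *)
pose w0 := (dot3 a a)^-1 *: cross3 u a.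
have w0a : u + cross3 w0 a = (dot3 a u / dot3 a a) *: a.
  by rewrite cross3Zl cross3_double scalerBr !scalerA mulVf // scale1r addrC subrK mulrC.
pose mu := - dot3 (v + cross3 w0 b) N / dot3 N N.
have mu_N : dot3 (v + cross3 w0 b) N + mu * dot3 N N = 0.
  by rewrite /mu divfK // addrN.
clearbody w0 mu.
have wa : cross3 (w0 + mu *: a) a = cross3 w0 a.
  by rewrite cross3Dl cross3Zl cross3_self scaler0 addr0.
exists (w0 + mu *: a); split.
- by rewrite wa w0a dot3Zl dot3_crossl mulr0.
- by rewrite cross3Dl cross3Zl addrA dot3Dl dot3Zl.
- by rewrite wa w0a cross3Zl cross3_self scaler0.
Qed.

Lemma rotation_aligns_inj w w' :
  rotation_aligns a b u v w -> rotation_aligns a b u v w' -> w = w'.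
Proof.
case=> _ vw uw [_ vw' uw']; apply/eqP; rewrite -subr_eq0; apply/eqP.
apply: rotation_aligns_kernel.
- have -> : cross3 (w - w') a = (u + cross3 w a) - (u + cross3 w' a).
    by rewrite cross3Dl cross3Nl opprD addrACA subrr add0r.
  by rewrite cross3Dl cross3Nl uw uw' subrr.
- have -> : cross3 (w - w') b = (v + cross3 w b) - (v + cross3 w' b).
    by rewrite cross3Dl cross3Nl opprD addrACA subrr add0r.
  by rewrite dot3Dl dot3Nl vw vw' subrr.
Qed.

End RotationAligns.

Section Truss.
Variables (n : nat) (p : 'I_n -> 'rV[R]_3).

Lemma blk_rotationB (c : 'I_n) (q : 'M[R]_(n, 3)) (cxy cxz cyz : R) (i j : 'I_n) :
  let qb := q + cxy *: pxy p c + cxz *: pxz p c + cyz *: pyz p c in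
  blk qb i - blk qb j = blk q i - blk q j + cross3 (vec3 cyz (- cxz) cxy) (p i - p j).
Proof.
rewrite /blk !linearD !linearZ /= !rowK.
by apply/row3P; rewrite /cross3 !coord3E; ring.
Qed.

Lemma triangle_aligned_rotation c q (cxy cxz cyz : R) (s1 s2 s3 : 'I_n) :
  triangle_aligned p (q + cxy *: pxy p c + cxz *: pxz p c + cyz *: pyz p c) s1 s2 s3 <->
  rotation_aligns (p s2 - p s1) (p s3 - p s1) (blk q s2 - blk q s1)
    (blk q s3 - blk q s1) (vec3 cyz (- cxz) cxy).
Proof.
rewrite /triangle_aligned /rotation_aligns -(opprB (blk _ s2)) -(opprB (p s2)).
by rewrite cross3NN !blk_rotationB.
Qed.

Lemma oriented_triangle_edge tets (s1 s2 s3 : 'I_n) :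
  oriented_triangle tets s1 s2 s3 -> is_edge tets s1 s2.
Proof.
case=> /and3P[/norP[s12 _] _ _] [T T_in /and3P[s1T s2T _]].
by rewrite /is_edge s12; apply/existsP; exists T; rewrite T_in s1T s2T.
Qed.

(* The fourth vertex [d] of [T] spans with the face a tetrahedron whose volume
   the aspect bound keeps away from zero. *)
Lemma aspect_bounded_face_normal_neq0 A (T : {set 'I_n}) (s1 s2 s3 : 'I_n) :
  #|T| = 4%N -> aspect_bounded p A T -> 0 < elen p s1 s2 ->
  uniq [:: s1; s2; s3] -> s1 \in T -> s2 \in T -> s3 \in T ->
  cross3 (p s2 - p s1) (p s3 - p s1) != 0.
Proof.
move=> T4 aspectT elen_gt0 s_uniq s1T s2T s3T.
have [d dT d_notin_s] : exists2 d, d \in T & d \notin [:: s1; s2; s3].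
  apply/subsetPn; apply/negP => /subset_leq_card.
  by rewrite T4 => /leq_trans/(_ (card_size _)).
have sd_uniq : uniq (rcons [:: s1; s2; s3] d) by rewrite rcons_uniq d_notin_s.
have := aspectT s1 s2 s3 d s1T s2T s3T dT sd_uniq s1 s2 s1T s2T.
apply: contraTneq => N0; rewrite det3_cross N0 !coord3E !mulr0 !addr0 normr0 mulr0.
by rewrite -ltNge exprn_gt0.
Qed.

End Truss.

End Vec3.

Theorem lemma4p1 (R : rcfType) (n : nat) (p : 'I_n -> 'rV[R]_3)
    (tets : {set {set 'I_n}}) (gamma : {set 'I_n} -> R)
    (A lmin lmax gmin gmax : R) (c : 'I_n) (q : 'M[R]_(n,3)) :
  injective p ->
  edge_simple p tets gamma A lmin lmax gmin gmax ->
  stiffly_connected tets ->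
  (forall v : 'M[R]_(n,3), stiffness p tets gamma v = 0 -> dotN q v = 0) ->
  forall s1 s2 s3 : 'I_n, oriented_triangle tets s1 s2 s3 ->
  exists qb : 'M[R]_(n,3),
    [/\ exists cxy cxz cyz : R,
          qb = q + cxy *: pxy p c + cxz *: pxz p c + cyz *: pyz p c,
        triangle_aligned p qb s1 s2 s3 &
        forall qb' : 'M[R]_(n,3),
          (exists cxy cxz cyz : R,
             qb' = q + cxy *: pxy p c + cxz *: pxz p c + cyz *: pyz p c) ->
          triangle_aligned p qb' s1 s2 s3 -> qb' = qb].
Proof.
move=> _ [[_ lmin_gt0 _] [[tet_card _] aspect elen_bounds _]] _ _ s1 s2 s3 tri.
have /elen_bounds/andP[lmin_le _] := oriented_triangle_edge tri.
have [s_uniq [T T_in /and3P[s1T s2T s3T]]] := tri.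
have N0 := aspect_bounded_face_normal_neq0 (tet_card T T_in) (aspect T T_in)
  (lt_le_trans lmin_gt0 lmin_le) s_uniq s1T s2T s3T.
set u := blk q s2 - blk q s1; set v := blk q s3 - blk q s1.
have [w w_aligns] := rotation_aligns_exists u v N0.
exists (q + cz w *: pxy p c + (- cy w) *: pxz p c + cx w *: pyz p c); split.
- by exists (cz w), (- cy w), (cx w).
- by rewrite triangle_aligned_rotation opprK -vec3E.
- move=> _ [cxy [cxz [cyz ->]]]; rewrite triangle_aligned_rotation.
  move/(rotation_aligns_inj N0 w_aligns) ->.
  by rewrite cx_vec3 cy_vec3 cz_vec3 opprK.
Qed.
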